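(* Let $K_n$ be the complete graph on $n$ vertices and let $k$ be a positive integer with $k\leq n-1$. Then $\gamma_{gr}^{k}(K_n)=k$, $\gamma_{gr}^{L,k}(K_n)=k+1$, $\gamma_{gr}^{Z,k}(K_n)=k$, and $\gamma_{gr}^{t,k}(K_n)=k+1$.
   Context: For a vertex $v$, $N(v)$ is its open neighborhood and $N[v]=N(v)\cup\{v\}$. A sequence $S=(v_1,\ldots,v_m)$ of distinct vertices is a $k$-sequence (resp. $k$-$L$-sequence, $k$-$Z$-sequence, $k$-$t$-sequence) if for each $i\in[m]$ there is a vertex $u_i$ with $u_i\in N[v_i]$ (resp. $N[v_i]$, $N(v_i)$, $N(v_i)$) such that the number of indices $j<i$ with $u_i\in N[v_j]$ (resp. $N(v_j)$, $N[v_j]$, $N(v_j)$) is less than $k$. The numbers $\gamma_{gr}^{k}(G)$, $\gamma_{gr}^{L,k}(G)$, $\gamma_{gr}^{Z,k}(G)$, $\gamma_{gr}^{t,k}(G)$ are the maximum lengths of such sequences, respectively. *)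

From mathcomp Require Import all_boot.
Set Implicit Arguments. Unset Strict Implicit. Unset Printing Implicit Defensive.

(* A simple graph on a finite vertex type T is given by an adjacency relation
   e : rel T (assumed symmetric and irreflexive where relevant). *)

Definition openN (T : finType) (e : rel T) (v : T) : {set T} := [set u | e v u].
Definition closedN (T : finType) (e : rel T) (v : T) : {set T} := v |: openN e v.

Definition gr_seq (T : finType) (A B : T -> {set T}) (k m : nat)
    (t : m.-tuple T) : bool :=
  uniq t &&
  [forall i : 'I_m, [exists u : T,
     (u \in A (tnth t i)) &&
     (#|[set j : 'I_m | (j < i) && (u \in B (tnth t j))]| < k)]].

(* maximum length of such a sequence (distinctness bounds lengths by #|T|) *)
Definition gamma_gen (T : finType) (A B : T -> {set T}) (k : nat) : nat :=
  \max_(m < #|T|.+1 | [exists t : m.-tuple T, gr_seq A B k t]) m.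

Definition gamma_gr (T : finType) (e : rel T) (k : nat) : nat :=
  gamma_gen (closedN e) (closedN e) k.
Definition gamma_grL (T : finType) (e : rel T) (k : nat) : nat :=
  gamma_gen (closedN e) (openN e) k.
Definition gamma_grZ (T : finType) (e : rel T) (k : nat) : nat :=
  gamma_gen (openN e) (closedN e) k.
Definition gamma_grt (T : finType) (e : rel T) (k : nat) : nat :=
  gamma_gen (openN e) (openN e) k.

Definition Kn (n : nat) : rel 'I_n := fun x y => x != y.
Arguments Kn n : clear implicits.

From mathcomp Require Import all_boot.
From mathcomp Require Import zify.

Set Implicit Arguments.
Unset Strict Implicit.
Unset Printing Implicit Defensive.

(* In K_n every vertex lies in every closed neighbourhood, so at position i of a
   sequence all i earlier terms are counted and at most k terms fit; a vertex
   lies in every open neighbourhood except its own, so at least i - 1 earlier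
   terms are counted and at most k + 1 terms fit.  Any k distinct vertices
   realise the first bound.  For the second, when counting in open
   neighbourhoods the first term v_1 is never counted at its own position, so
   choosing u_i = v_1 for every later term keeps all counts below k. *)

Section GrundySequences.

Variable T : finType.
Implicit Types (A B : T -> {set T}) (k m : nat).

Definition gr_count B m (t : m.-tuple T) (i : 'I_m) (u : T) : nat :=
  #|[set j : 'I_m | (j < i) && (u \in B (tnth t j))]|.

Lemma gr_seqP A B k m (t : m.-tuple T) :
  reflect (uniq t /\ forall i, exists2 u, u \in A (tnth t i) & gr_count B t i u < k)
          (gr_seq A B k t).
Proof.
apply: (iffP andP) => -[uniq_t Ht]; split=> //.
  by move=> i; have /existsP[u /andP[]] := forallP Ht i; exists u.
by apply/forallP => i; have [u Au Bu] := Ht i; apply/existsP; exists u; apply/andP.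
Qed.

Lemma gamma_gen_max A B k b :
  (exists t : b.-tuple T, gr_seq A B k t) ->
  (forall m (t : m.-tuple T), gr_seq A B k t -> m <= b) ->
  gamma_gen A B k = b.
Proof.
move=> [t gr_t] ub; apply/eqP; rewrite eqn_leq; apply/andP; split.
  by apply/bigmax_leqP => m /existsP[s /ub].
have /gr_seqP[uniq_t _] := gr_t.
have b_lt : b < #|T|.+1.
  by rewrite ltnS; apply/card_geqP; exists t; rewrite size_tuple.
apply: (@leq_bigmax_cond _ _ (fun m : 'I_#|T|.+1 => nat_of_ord m) (Ordinal b_lt)).
by apply/existsP; exists t.
Qed.

Lemma exists_uniq_tuple b : b <= #|T| -> exists t : b.-tuple T, uniq t.
Proof.
move=> /card_geqP[s [uniq_s /eqP size_s _]].
by exists (Tuple size_s).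
Qed.

Lemma card_ord_lt (m i : nat) : i <= m -> #|[set j : 'I_m | j < i]| = i.
Proof.
move=> i_le; have widen_inj : injective (widen_ord i_le).
  by move=> x y /(congr1 val) /= /ord_inj.
have -> : [set j : 'I_m | j < i] = widen_ord i_le @: [set: 'I_i].
  apply/setP => j; rewrite inE; apply/idP/imsetP => [j_lt | [j' _ ->]].
    by exists (Ordinal j_lt) => //; apply: val_inj.
  by rewrite /= ltn_ord.
by rewrite card_imset // cardsT card_ord.
Qed.

Lemma gr_count_le {B m} {t : m.-tuple T} {i : 'I_m} {u} : gr_count B t i u <= i.
Proof.
rewrite -[leqRHS](card_ord_lt (ltnW (ltn_ord i))).
by apply: subset_leq_card; apply/subsetP => j; rewrite !inE => /andP[].
Qed.

Lemma gr_count_lt B m (t : m.-tuple T) (i j0 : 'I_m) u :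
  j0 < i -> u \notin B (tnth t j0) -> gr_count B t i u < i.
Proof.
move=> j0_lt u_notin; rewrite -[ltnRHS](card_ord_lt (ltnW (ltn_ord i))).
apply: proper_card; apply/properP; split.
  by apply/subsetP => j; rewrite !inE => /andP[].
by exists j0; rewrite !inE ?j0_lt // (negbTE u_notin) andbF.
Qed.

Lemma gr_seq_size_le A B k d m (t : m.-tuple T) :
  gr_seq A B k t -> (forall (i : 'I_m) u, i <= gr_count B t i u + d) -> m <= k + d.
Proof.
move=> /gr_seqP[_ gr_t] count_ge; rewrite leqNgt; apply/negP => lt_m.
have [u _ count_lt] := gr_t (Ordinal lt_m).
by have := count_ge (Ordinal lt_m) u; rewrite /= leq_add2r leqNgt count_lt.
Qed.

Lemma gr_seq_short A B k m (t : m.-tuple T) :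
  uniq t -> m <= k -> (forall i, exists u, u \in A (tnth t i)) -> gr_seq A B k t.
Proof.
move=> uniq_t m_le A_t; apply/gr_seqP; split=> // i.
have [u Au] := A_t i; exists u => //.
exact: leq_ltn_trans gr_count_le (leq_trans (ltn_ord i) m_le).
Qed.

Lemma gr_seq_openN_head A (e : rel T) k m (t : m.+1.-tuple T) :
  irreflexive e -> uniq t -> 0 < k -> m <= k ->
  (exists u, u \in A (tnth t ord0)) ->
  (forall i : 'I_m.+1, 0 < i -> tnth t ord0 \in A (tnth t i)) ->
  gr_seq A (openN e) k t.
Proof.
move=> e_irr uniq_t k_gt0 m_le [u0 Au0] A_head; apply/gr_seqP; split=> // i.
have [i0 | i_gt0] := posnP i.
  have -> : i = ord0 by apply: val_inj.
  by exists u0 => //; rewrite (leq_ltn_trans gr_count_le).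
exists (tnth t ord0); first exact: A_head.
apply: leq_trans (gr_count_lt (j0 := ord0) _ _) _ => //; first by rewrite inE e_irr.
by rewrite -ltnS (leq_trans (ltn_ord i)).
Qed.

End GrundySequences.

Section CompleteGraph.

Variable n : nat.

Lemma closedN_Kn (u v : 'I_n) : u \in closedN (Kn n) v.
Proof. by rewrite /closedN !inE /Kn eq_sym orbN. Qed.

Lemma openN_Kn (u v : 'I_n) : (u \in openN (Kn n) v) = (v != u).
Proof. by rewrite inE. Qed.

Lemma Kn_irreflexive : irreflexive (Kn n).
Proof. by move=> v; rewrite /Kn eqxx. Qed.

Lemma exists_openN_Kn (v : 'I_n) : 1 < n -> exists u, u \in openN (Kn n) v.
Proof.
move=> n_gt1; have n_gt0 := ltnW n_gt1.
have [->|v_neq] := eqVneq v (Ordinal n_gt0).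
  by exists (Ordinal n_gt1); rewrite openN_Kn -val_eqE.
by exists (Ordinal n_gt0); rewrite openN_Kn.
Qed.

Lemma gr_count_closedN_Kn m (t : m.-tuple 'I_n) (i : 'I_m) u :
  gr_count (closedN (Kn n)) t i u = i.
Proof.
rewrite /gr_count -[RHS](card_ord_lt (ltnW (ltn_ord i))).
by apply: eq_card => j; rewrite [in LHS]inE closedN_Kn andbT inE.
Qed.

Lemma gr_count_openN_Kn m (t : m.-tuple 'I_n) (i : 'I_m) u :
  uniq t -> i <= (gr_count (openN (Kn n)) t i u).+1.
Proof.
move=> /tuple_uniqP t_inj.
have at_u_le1 : #|[set j | tnth t j == u]| <= 1.
  apply/card_le1_eqP => j j'; rewrite !inE => /eqP tj /eqP tj'.
  by apply: t_inj; rewrite tj tj'.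
have cover : [set j : 'I_m | j < i] \subset
             [set j : 'I_m | (j < i) && (u \in openN (Kn n) (tnth t j))] :|:
             [set j | tnth t j == u].
  apply/subsetP => j; rewrite !inE /Kn => ->.
  by case: (tnth t j == u).
rewrite -[leqLHS](card_ord_lt (ltnW (ltn_ord i))) -addn1.
apply: leq_trans (subset_leq_card cover) _.
exact: leq_trans (leq_card_setU _ _) (leq_add (leqnn _) at_u_le1).
Qed.

Lemma gr_seq_closedN_Kn_size A k m (t : m.-tuple 'I_n) :
  gr_seq A (closedN (Kn n)) k t -> m <= k.
Proof.
move=> gr_t; rewrite -[k]addn0; apply: (gr_seq_size_le gr_t) => i u.
by rewrite gr_count_closedN_Kn addn0.
Qed.

Lemma gr_seq_openN_Kn_size A k m (t : m.-tuple 'I_n) :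
  gr_seq A (openN (Kn n)) k t -> m <= k.+1.
Proof.
move=> gr_t; have /gr_seqP[uniq_t _] := gr_t.
by rewrite -addn1; apply: (gr_seq_size_le gr_t) => i u; rewrite addn1 gr_count_openN_Kn.
Qed.

Lemma gamma_gr_Kn k : k <= n -> gamma_gr (Kn n) k = k.
Proof.
move=> k_le; have [t uniq_t] : exists t : k.-tuple 'I_n, uniq t.
  by apply: exists_uniq_tuple; rewrite card_ord.
apply: gamma_gen_max => [|m s]; last exact: gr_seq_closedN_Kn_size.
by exists t; apply: gr_seq_short => // i; exists (tnth t i); apply: closedN_Kn.
Qed.

Lemma gamma_grZ_Kn k : 1 < n -> k <= n -> gamma_grZ (Kn n) k = k.
Proof.
move=> n_gt1 k_le; have [t uniq_t] : exists t : k.-tuple 'I_n, uniq t.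
  by apply: exists_uniq_tuple; rewrite card_ord.
apply: gamma_gen_max => [|m s]; last exact: gr_seq_closedN_Kn_size.
by exists t; apply: gr_seq_short => // i; apply: exists_openN_Kn.
Qed.

Lemma gamma_grL_Kn k : 0 < k -> k < n -> gamma_grL (Kn n) k = k.+1.
Proof.
move=> k_gt0 k_lt; have [t uniq_t] : exists t : k.+1.-tuple 'I_n, uniq t.
  by apply: exists_uniq_tuple; rewrite card_ord.
apply: gamma_gen_max => [|m s]; last exact: gr_seq_openN_Kn_size.
exists t; apply: (gr_seq_openN_head Kn_irreflexive uniq_t k_gt0) => //.
  by exists (tnth t ord0); apply: closedN_Kn.
by move=> i _; apply: closedN_Kn.
Qed.

Lemma gamma_grt_Kn k : 0 < k -> k < n -> gamma_grt (Kn n) k = k.+1.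
Proof.
move=> k_gt0 k_lt; have n_gt1 : 1 < n by apply: leq_ltn_trans k_lt.
have [t uniq_t] : exists t : k.+1.-tuple 'I_n, uniq t.
  by apply: exists_uniq_tuple; rewrite card_ord.
apply: gamma_gen_max => [|m s]; last exact: gr_seq_openN_Kn_size.
exists t; apply: (gr_seq_openN_head Kn_irreflexive uniq_t k_gt0) => //.
  exact: exists_openN_Kn.
have /tuple_uniqP t_inj := uniq_t.
by move=> i i_gt0; rewrite openN_Kn; apply: contraTneq i_gt0 => /t_inj ->.
Qed.

End CompleteGraph.

Theorem mainTheorem6 (n k : nat) (hk : 0 < k) (hkn : k <= n - 1) :
  [/\ gamma_gr (Kn n) k = k, gamma_grL (Kn n) k = k.+1,
      gamma_grZ (Kn n) k = k & gamma_grt (Kn n) k = k.+1].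
Proof.
have k_lt_n : k < n by lia.
have n_gt1 : 1 < n by lia.
split.
- exact/gamma_gr_Kn/ltnW.
- exact: gamma_grL_Kn.
- exact/gamma_grZ_Kn/ltnW.
- exact: gamma_grt_Kn.
Qed.
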